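(* Let $G=(V,E,w)$ be a finite undirected graph with positive vertex weights and $v\in V$, and run the covering procedure from $v$ (with any choice of extending fathers at each step). (a) If $v$ is uncovered, then $v$ is inclusive (it lies in some MWIS of $G$), and $\alpha_w(G)=\alpha_w(G[V\setminus N[v]])+w(v)$. (b) If $v$ is covered with covering set $C_v$, then either $v$ is inclusive or $C_v$ is contained in every MWVC of $G$. Moreover, if $u$ is another covered vertex with covering set $C_u$ such that $v\notin N(u)$, $u\in C_v$ and $v\in C_u$, then $\{u,v\}$ is a simultaneous set.
   Context: $G=(V,E,w)$: finite simple undirected graph, $w:V\to\mathbb{R}^{+}$, $w(S)=\sum_{x\in S}w(x)$. MWIS = maximum weight independent set; MWVC = minimum weight vertex cover. $N(x)$ is the neighbour set, $N[x]=N(x)\cup\{x\}$, $N^2(x)$ the set of vertices at distance exactly $2$ from $x$; $G[S]$ is the induced subgraph and $\alpha_w(G[S])$ the maximum weight of an independent set in $G[S]$ ($0$ if $S=\emptyset$). A vertex is inclusive if it lies in some MWIS. A set $X$ is a simultaneous set if either $X$ is contained in some MWIS or $X$ is contained in some MWVC. Father / extending father / mirror: for $C\subseteq V$, a vertex $f\in C$ with $w(f)<\alpha_w(G[N(f)\setminus C])$ is a father of $C$; it is an extending father if some $u\in N^2(f)$ satisfies $w(f)\ge\alpha_w(G[N(f)\setminus(C\cup N(u))])$; such $u$ are mirrors of $f$, and $M(f)$ is the set of mirrors of $f$ (with respect to the current $C$). Covering procedure from $v$: start with $C:=\{v\}$ and repeat: (i) if $C$ has an extending father $f$, add $M(f)$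 to $C$; (ii) if some $x\in C$ satisfies $w(x)\ge\alpha_w(G[N(x)\setminus C])$, halt and call $v$ uncovered; (iii) if $C$ has no extending father, halt, call $v$ covered and $C_v:=C$ its covering set. *)

(* A graph is a symmetric irreflexive relation e on a finType T;
   vertex weights w : T -> R over an arbitrary realFieldType R (positivity is a
   hypothesis of the theorem). *)
From HB Require Import structures.
From mathcomp Require Import all_boot all_order all_algebra.
Set Implicit Arguments. Unset Strict Implicit. Unset Printing Implicit Defensive.
Import Order.TTheory GRing.Theory Num.Theory.
Local Open Scope ring_scope.

Section Graph.
Variables (T : finType) (R : realFieldType) (e : rel T) (w : T -> R).

Definition wt (S : {set T}) : R := \sum_(x in S) w x.

Definition nbh (x : T) : {set T} := [set y | e x y].
Definition cnbh (x : T) : {set T} := x |: nbh x.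
Definition nbh2 (x : T) : {set T} :=
  [set u | (u != x) && ~~ e x u && [exists y, e x y && e y u]].

Definition independent (S : {set T}) : bool :=
  [forall x in S, forall y in S, ~~ e x y].
Definition vertex_cover (S : {set T}) : bool :=
  [forall x, forall y, e x y ==> (x \in S) || (y \in S)].

(* alpha_w(G[S]) : maximum weight of an independent subset of S (0 if S empty) *)
Definition alphaw (S : {set T}) : R :=
  \big[Num.max/0]_(I : {set T} | (I \subset S) && independent I) wt I.

Definition is_MWIS (I : {set T}) : Prop :=
  independent I /\ forall J, independent J -> wt J <= wt I.
Definition is_MWVC (C : {set T}) : Prop :=
  vertex_cover C /\ forall D, vertex_cover D -> wt C <= wt D.

Definition inclusive (x : T) : Prop := exists I, is_MWIS I /\ x \in I.

Definition simultaneous (X : {set T}) : Prop :=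
  (exists I, is_MWIS I /\ X \subset I) \/ (exists C, is_MWVC C /\ X \subset C).

Definition father (C : {set T}) (f : T) : Prop :=
  f \in C /\ w f < alphaw (nbh f :\: C).
Definition is_mirror (C : {set T}) (f u : T) : Prop :=
  u \in nbh2 f /\ alphaw (nbh f :\: (C :|: nbh u)) <= w f.
Definition extending_father (C : {set T}) (f : T) : Prop :=
  father C f /\ exists u, is_mirror C f u.
Definition mirrors (C : {set T}) (f : T) : {set T} :=
  [set u in nbh2 f | alphaw (nbh f :\: (C :|: nbh u)) <= w f].

Definition stop_uncovered (C : {set T}) : Prop :=
  exists2 x, x \in C & alphaw (nbh x :\: C) <= w x.

(* The sets C that the covering procedure from v can reach at the beginning of an
   iteration, for some choice of extending fathers: start from {v}; while the
   halting condition (ii) fails and an extending father f exists, add M(f). *)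
Inductive cov_reach (v : T) : {set T} -> Prop :=
| cov_start : cov_reach v [set v]
| cov_step C f : cov_reach v C -> ~ stop_uncovered C -> extending_father C f ->
    cov_reach v (C :|: mirrors C f).

Definition uncovered (v : T) : Prop :=
  exists C, cov_reach v C /\ stop_uncovered C.

Definition covered_with (v : T) (C : {set T}) : Prop :=
  cov_reach v C /\ ~ stop_uncovered C /\ ~ (exists f, extending_father C f).

End Graph.

(* The argument rests on two facts about maximum weight independent sets.
   - Exchange: if I is an MWIS, every neighbour of x lying in I belongs to a set
     A, and alpha_w(G[A]) <= w(x), then x |: (I \ N(x)) is again an MWIS.
   - Invariant of the procedure: call v "swap-blocked" when, for every MWIS I
     avoiding v, the exchange v |: (I \ N(v)) is NOT an MWIS.  If v is
     swap-blocked, every set C reached by the covering procedure from v is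
     disjoint from every MWIS avoiding v: a mirror u of an extending father f
     that lay in such an MWIS I could be exchanged for f, producing an MWIS that
     avoids v and contains the vertex f of C (for f = v this contradicts the
     swap-blockedness directly).
   A non-inclusive vertex is swap-blocked, which gives (a) (the halting vertex
   of case (ii) can be exchanged in, contradicting the invariant) and the first
   half of (b) (complements of MWVCs are MWISs); the identity in (a) follows
   because alpha_w(G) is the weight of any MWIS, here one containing v.
   If {u, v} is not simultaneous, every MWIS contains exactly one of u, v, so
   both are swap-blocked, and the two invariants contradict each other on any
   MWIS. *)
From HB Require Import structures.
From mathcomp Require Import all_boot all_order all_algebra.
From Stdlib Require Import Classical.
From mathcomp Require Import lra.
Set Implicit Arguments. Unset Strict Implicit. Unset Printing Implicit Defensive.
Import Order.TTheory GRing.Theory Num.Theory.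
Local Open Scope ring_scope.

Section CoveringProcedure.
Variables (T : finType) (R : realFieldType) (e : rel T) (w : T -> R).
Hypotheses (e_sym : symmetric e) (e_irr : irreflexive e).

Lemma indepP (S : {set T}) :
  reflect (forall x y, x \in S -> y \in S -> ~~ e x y) (independent e S).
Proof.
apply: (iffP forallP) => [H x y xS yS|H x]; last first.
  by apply/implyP => xS; apply/forallP => y; apply/implyP => yS; apply: H.
by move: (H x); rewrite xS /= => /forallP /(_ y); rewrite yS.
Qed.

Lemma indep0 : independent e set0.
Proof. by apply/indepP => x y; rewrite inE. Qed.

Lemma indep_sub (S S' : {set T}) :
  S' \subset S -> independent e S -> independent e S'.
Proof. by move=> /subsetP sS /indepP H; apply/indepP => x y /sS xS /sS yS; apply: H. Qed.

Lemma indep_add (J : {set T}) x :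
  independent e J -> (forall y, y \in J -> ~~ e x y) -> independent e (x |: J).
Proof.
move=> /indepP iJ H; apply/indepP => a b; rewrite !inE.
move=> /orP[/eqP->|aJ] /orP[/eqP->|bJ]; rewrite ?e_irr //; first exact: H.
  by rewrite e_sym; apply: H.
exact: iJ.
Qed.

Lemma alpha_ge (A J : {set T}) :
  J \subset A -> independent e J -> wt w J <= alphaw e w A.
Proof.
move=> sJ iJ; rewrite /alphaw.
apply: (@le_bigmax_cond _ _ _ 0 J (fun I => (I \subset A) && independent e I)).
by rewrite sJ iJ.
Qed.

Lemma alpha_le (A : {set T}) (c : R) : 0 <= c ->
  (forall J : {set T}, J \subset A -> independent e J -> wt w J <= c) -> alphaw e w A <= c.
Proof. by move=> c0 H; rewrite /alphaw; apply: bigmax_le => // I /andP[]; apply: H. Qed.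

Lemma wt_split (S B : {set T}) : wt w S = wt w (S :&: B) + wt w (S :\: B).
Proof. by rewrite /wt (big_setID B). Qed.

Lemma wtC (S : {set T}) : wt w (~: S) = wt w [set: T] - wt w S.
Proof. by rewrite (wt_split [set: T] S) setTI setTD addrC addKr. Qed.

Lemma vc_compl (S : {set T}) : vertex_cover e (~: S) = independent e S.
Proof.
apply/idP/indepP => [/forallP H x y xS yS|H].
  by apply/negP => exy; move: (H x) => /forallP /(_ y); rewrite exy !inE xS yS.
apply/forallP => x; apply/forallP => y; apply/implyP => exy; rewrite !inE -negb_and.
by apply/negP => /andP[xS yS]; move: (H x y xS yS); rewrite exy.
Qed.

Lemma MWIS_compl (I : {set T}) : is_MWIS e w I -> is_MWVC e w (~: I).
Proof.
move=> [iI mI]; split; first by rewrite vc_compl.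
move=> D vD; rewrite -(setCK D) vc_compl in vD.
by have := mI _ vD; rewrite !wtC; lra.
Qed.

Lemma MWVC_compl (K : {set T}) : is_MWVC e w K -> is_MWIS e w (~: K).
Proof.
move=> [vK mK]; split; first by rewrite -vc_compl setCK.
by move=> J iJ; rewrite -vc_compl in iJ; have := mK _ iJ; rewrite !wtC; lra.
Qed.

Lemma MWIS_exists : exists I, is_MWIS e w I.
Proof. by case: (arg_maxP (wt w) indep0) => I iI H; exists I. Qed.

Lemma alpha_MWIS (I : {set T}) : is_MWIS e w I -> alphaw e w [set: T] = wt w I.
Proof.
move=> [iI mI]; apply/eqP; rewrite eq_le alpha_ge ?subsetT // andbT.
apply: alpha_le => [|J _ /mI //].
by have := mI _ indep0; rewrite /wt big_set0.
Qed.

Lemma exchange (I A : {set T}) x : is_MWIS e w I ->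
  (forall y, y \in I -> e x y -> y \in A) -> alphaw e w A <= w x ->
  is_MWIS e w (x |: (I :\: nbh e x)).
Proof.
move=> [iI mI] HA Hal.
have iI' : independent e (x |: (I :\: nbh e x)).
  apply: indep_add => [|y]; last by rewrite !inE => /andP[].
  by apply: indep_sub iI; apply: subsetDl.
suff le : wt w I <= wt w (x |: (I :\: nbh e x)) by split => // J /mI /le_trans; apply.
case: (boolP (x \in I)) => xI.
  suff -> : x |: (I :\: nbh e x) = I by [].
  apply/setP => y; rewrite !inE; case: (eqVneq y x) => [->|_] //=.
  by case: (boolP (y \in I)) => yI; rewrite ?andbF // andbT; move/indepP: iI; apply.
rewrite /wt big_setU1 /=; last by rewrite !inE (negbTE xI) andbF.
have nbh_le : wt w (I :&: nbh e x) <= w x.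
  apply: le_trans Hal; apply: alpha_ge; last by apply: indep_sub iI; apply: subsetIl.
  by apply/subsetP => y; rewrite !inE => /andP[yI exy]; apply: HA.
by rewrite [X in X <= _](wt_split I (nbh e x)); rewrite /wt in nbh_le *; lra.
Qed.

Definition swap_blocked (v : T) : Prop :=
  forall I, is_MWIS e w I -> v \notin I -> ~ is_MWIS e w (v |: (I :\: nbh e v)).

Lemma reach_avoids_MWIS v C : swap_blocked v -> cov_reach e w v C ->
  forall I, is_MWIS e w I -> v \notin I -> forall x, x \in I -> x \in C -> False.
Proof.
move=> blocked; elim=> [|C' f _ IH _ [[fC _] _]] I mI vI x xI.
  by rewrite inE => /eqP xv; move: vI; rewrite -xv xI.
rewrite inE => /orP[xC|]; first exact: (IH I mI vI x xI xC).
rewrite inE => /andP[_ mirror_x].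
have nbh_f_free : forall y, y \in I -> e f y -> y \in nbh e f :\: (C' :|: nbh e x).
  move=> y yI efy; rewrite !inE efy andbT negb_or; apply/andP; split.
    by apply/negP => yC; exact: (IH I mI vI y yI yC).
  by move: mI => [/indepP iI _]; apply: iI.
have mI' := exchange mI nbh_f_free mirror_x.
case: (eqVneq f v) => [fv|fv]; first by apply: (blocked I mI vI); rewrite -fv.
apply: (IH _ mI' _ f); rewrite ?inE ?eqxx //.
by rewrite eq_sym (negbTE fv) /= (negbTE vI) andbF.
Qed.

Lemma not_inclusive_blocked v : ~ inclusive e w v -> swap_blocked v.
Proof. by move=> ni I _ _ mI'; apply: ni; exists (v |: (I :\: nbh e v)); rewrite !inE eqxx. Qed.

Lemma exactly_one_blocked a b : ~~ e b a ->
  (forall I, is_MWIS e w I -> ~ (a \in I /\ b \in I)) ->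
  (forall I, is_MWIS e w I -> a \in I \/ b \in I) -> swap_blocked b.
Proof.
move=> nba H1 H2 I mI bI mI'; apply: (H1 _ mI'); split; last by rewrite !inE eqxx.
case: (H2 I mI) => [aI|]; last by rewrite (negbTE bI).
by rewrite !inE aI (negbTE nba) orbT.
Qed.

Lemma uncovered_inclusive v C :
  cov_reach e w v C -> stop_uncovered e w C -> inclusive e w v.
Proof.
move=> rC [x xC Hal]; apply: NNPP => ni.
have avoid := reach_avoids_MWIS (not_inclusive_blocked ni) rC.
have vI : forall J, is_MWIS e w J -> v \notin J.
  by move=> J mJ; apply/negP => vJ; apply: ni; exists J.
have [I mI] := MWIS_exists.
have nbh_x_free : forall y, y \in I -> e x y -> y \in nbh e x :\: C.
  move=> y yI exy; rewrite !inE exy andbT; apply/negP => yC.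
  exact: (avoid I mI (vI _ mI) y yI yC).
have mI' := exchange mI nbh_x_free Hal.
by apply: (avoid _ mI' (vI _ mI') x); rewrite ?inE ?eqxx.
Qed.

Lemma alpha_inclusive v :
  inclusive e w v -> alphaw e w [set: T] = alphaw e w (~: cnbh e v) + w v.
Proof.
move=> [I [mI vI]]; have [iI _] := mI.
have iv : independent e [set v] by apply: indep_sub iI; rewrite sub1set.
have wv_le : w v <= alphaw e w [set: T].
  by have := alpha_ge (subsetT [set v]) iv; rewrite /wt big_set1.
apply/eqP; rewrite eq_le; apply/andP; split.
  rewrite (alpha_MWIS mI) /wt (big_setD1 _ vI) /= addrC lerD2r.
  apply: alpha_ge; last by apply: indep_sub iI; apply: subsetDl.
  apply/subsetP => y; rewrite !inE => /andP[yv yI]; rewrite (negbTE yv) /=.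
  by move/indepP: iI => /(_ v y vI yI).
rewrite -lerBrDr; apply: alpha_le; first by rewrite subr_ge0.
move=> J sJ iJ; rewrite lerBrDr.
have vJ : v \notin J by apply/negP => /(subsetP sJ); rewrite !inE eqxx.
have := alpha_ge (subsetT (v |: J)); rewrite /wt big_setU1 //= addrC; apply.
by apply: indep_add => // y /(subsetP sJ); rewrite !inE negb_or => /andP[].
Qed.

Lemma reach_in_MWVC v C : cov_reach e w v C -> ~ inclusive e w v ->
  forall K, is_MWVC e w K -> C \subset K.
Proof.
move=> rC ni K mK; apply/subsetP => x xC; apply: NNPP => /negP xK.
have vK : v \notin ~: K.
  by apply/negP => vK; apply: ni; exists (~: K); split => //; exact: MWVC_compl.
have avoid := reach_avoids_MWIS (not_inclusive_blocked ni) rC (MWVC_compl mK) vK.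
by apply: (avoid x); rewrite ?inE.
Qed.

Lemma mutual_reach_simultaneous u v Cu Cv :
  cov_reach e w v Cv -> cov_reach e w u Cu -> ~~ e u v -> u \in Cv -> v \in Cu ->
  simultaneous e w [set u; v].
Proof.
move=> rCv rCu euv uCv vCu; apply: NNPP => ns.
have not_both : forall I, is_MWIS e w I -> ~ (u \in I /\ v \in I).
  move=> I mI [uI vI]; apply: ns; left; exists I; split => //.
  by apply/subsetP => y; rewrite !inE => /orP[]/eqP->.
have one_of : forall I, is_MWIS e w I -> u \in I \/ v \in I.
  move=> I mI; apply: NNPP => nn; apply: ns; right; exists (~: I); split.
    exact: MWIS_compl.
  by apply/subsetP => y; rewrite !inE => /orP[]/eqP-> /=; apply/negP => H; apply: nn; [left|right].
have blocked_v : swap_blocked v.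
  by apply: (exactly_one_blocked (a := u)) => //; rewrite e_sym.
have blocked_u : swap_blocked u.
  apply: (exactly_one_blocked (a := v)) => // [I mI [vI uI]|I mI].
    exact: (not_both I mI).
  by case: (one_of I mI); [right|left].
have [I mI] := MWIS_exists.
case: (boolP (v \in I)) => vI.
  have uI : u \notin I by apply/negP => uI; apply: (not_both I mI).
  exact: (reach_avoids_MWIS blocked_u rCu mI uI vI vCu).
have uI : u \in I by case: (one_of I mI) => //; rewrite (negbTE vI).
exact: (reach_avoids_MWIS blocked_v rCv mI vI uI uCv).
Qed.

End CoveringProcedure.

Theorem corollary3p6 (T : finType) (R : realFieldType) (e : rel T) (w : T -> R)
  (e_sym : symmetric e) (e_irr : irreflexive e) (w_pos : forall x, 0 < w x)
  (v : T) :
  (uncovered e w v ->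
     inclusive e w v /\
     alphaw e w [set: T] = alphaw e w (~: cnbh e v) + w v) /\
  (forall Cv : {set T}, covered_with e w v Cv ->
     (inclusive e w v \/ (forall K : {set T}, is_MWVC e w K -> Cv \subset K)) /\
     (forall (u : T) (Cu : {set T}), u != v -> covered_with e w u Cu ->
        ~~ e u v -> u \in Cv -> v \in Cu -> simultaneous e w [set u; v])).
Proof.
split.
  move=> [C [rC stop]]; have incl := uncovered_inclusive e_sym e_irr rC stop.
  by split; last exact: (alpha_inclusive e_sym e_irr).
move=> Cv [rCv _]; split.
  case: (classic (inclusive e w v)) => [|ni]; first by left.
  by right; exact: (reach_in_MWVC e_sym e_irr rCv).
move=> u Cu _ [rCu _]; exact: (mutual_reach_simultaneous e_sym e_irr rCv rCu).
Qed.
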